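(* For all $A,B\in{\sf Frm}$: if $\vdash_{\sf WF_{N_2}}A\vee B$, then $\vdash_{\sf WF_{N_2}}A$ or $\vdash_{\sf WF_{N_2}}B$.
   Context: Language: countably many atoms $p,q,\dots$, the constant $\bot$, and binary connectives $\wedge,\vee,\rightarrow$ ($\rightarrow$ is strict implication). ${\sf Frm}$ is the set of formulas built from atoms and $\bot$ with $\wedge,\vee,\rightarrow$; $A,B,C,D$ range over ${\sf Frm}$. The Hilbert system ${\sf WF_{N_2}}$ over ${\sf Frm}$ has axiom schemes $A\rightarrow(A\vee B)$; $B\rightarrow(A\vee B)$; $(A\wedge B)\rightarrow A$; $(A\wedge B)\rightarrow B$; $A\wedge(B\vee C)\rightarrow(A\wedge B)\vee(A\wedge C)$; $A\rightarrow A$; $\bot\rightarrow A$; and rules (from theorems to a theorem): from $A$ and $A\rightarrow B$ infer $B$; from $A$ infer $B\rightarrow A$; from $A\rightarrow B$ and $B\rightarrow C$ infer $A\rightarrow C$; from $A\rightarrow B$ and $A\rightarrow C$ infer $A\rightarrow(B\wedge C)$; from $A\rightarrow C$ and $B\rightarrow C$ infer $(A\vee B)\rightarrow C$; from $A$ and $B$ infer $A\wedge B$; (${\sf N_2}$) from $C\rightarrow A\vee D$ and $C\wedge B\rightarrow D$ infer $(A\rightarrow B)\rightarrow(C\rightarrow D)$. $\vdash_{\sf WF_{N_2}}A$ means $A$ is a theorem of this system. *)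

(* Formulas: countably many atoms (indexed by nat), bottom, /\, \/, strict implication. *)
Inductive Frm : Type :=
| Atom : nat -> Frm
| Bot : Frm
| And : Frm -> Frm -> Frm
| Or : Frm -> Frm -> Frm
| Imp : Frm -> Frm -> Frm.

Inductive Thm : Frm -> Prop :=
| ax_orI1 : forall A B, Thm (Imp A (Or A B))
| ax_orI2 : forall A B, Thm (Imp B (Or A B))
| ax_andE1 : forall A B, Thm (Imp (And A B) A)
| ax_andE2 : forall A B, Thm (Imp (And A B) B)
| ax_distr : forall A B C,
    Thm (Imp (And A (Or B C)) (Or (And A B) (And A C)))
| ax_id : forall A, Thm (Imp A A)
| ax_bot : forall A, Thm (Imp Bot A)
| r_mp : forall A B, Thm A -> Thm (Imp A B) -> Thm B
| r_weak : forall A B, Thm A -> Thm (Imp B A)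
| r_trans : forall A B C, Thm (Imp A B) -> Thm (Imp B C) -> Thm (Imp A C)
| r_andI : forall A B C, Thm (Imp A B) -> Thm (Imp A C) -> Thm (Imp A (And B C))
| r_orE : forall A B C, Thm (Imp A C) -> Thm (Imp B C) -> Thm (Imp (Or A B) C)
| r_adj : forall A B, Thm A -> Thm B -> Thm (And A B)
| r_N2 : forall A B C D,
    Thm (Imp C (Or A D)) -> Thm (Imp (And C B) D) ->
    Thm (Imp (Imp A B) (Imp C D)).


(* An Aczel slash: a disjunction is slashed only through a slashed disjunct,
   and an implication only if it is provable and carries the slash of its
   antecedent to its consequent. Slashed formulas are provable, and every
   theorem is slashed by induction on its derivation; for rule N2 the slash of
   C transfers to D through either disjunct of C -> A \/ D. *)

Fixpoint slash (F : Frm) : Prop :=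
  match F with
  | Atom _ | Bot => False
  | And A B => slash A /\ slash B
  | Or A B => slash A \/ slash B
  | Imp A B => Thm (Imp A B) /\ (slash A -> slash B)
  end.

Lemma thm_of_slash (F : Frm) : slash F -> Thm F.
Proof.
  induction F as [n | | A IHA B IHB | A IHA B IHB | A _ B _]; simpl.
  - contradiction.
  - contradiction.
  - intros [HA HB]. apply r_adj; auto.
  - intros [HA | HB].
    + apply (r_mp A); [apply IHA, HA | apply ax_orI1].
    + apply (r_mp B); [apply IHB, HB | apply ax_orI2].
  - intros [H _]. exact H.
Qed.

Lemma slash_imp (A B : Frm) :
  Thm (Imp A B) -> (slash A -> slash B) -> slash (Imp A B).
Proof. split; assumption. Qed.

Lemma slash_of_thm (F : Frm) : Thm F -> slash F.
Proof.
  induction 1 as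
    [ A B | A B | A B | A B | A B C | A | A
    | A B _ IHA _ [_ IHAB] | A B HA IHA
    | A B C HAB [_ IHAB] HBC [_ IHBC] | A B C HAB [_ IHAB] HAC [_ IHAC]
    | A B C HAC [_ IHAC] HBC [_ IHBC] | A B _ IHA _ IHB
    | A B C D HC [_ IHC] HD [_ IHD] ].
  1-7: apply slash_imp; [constructor | simpl; tauto].
  - exact (IHAB IHA).
  - apply slash_imp; [apply r_weak; exact HA | auto].
  - apply slash_imp; [apply (r_trans A B C); assumption | auto].
  - apply slash_imp; [apply r_andI; assumption | simpl; auto].
  - apply slash_imp; [apply r_orE; assumption | simpl; tauto].
  - split; assumption.
  - assert (HN2 : Thm (Imp (Imp A B) (Imp C D))) by (apply r_N2; assumption).
    apply slash_imp; [exact HN2 |].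
    intros HAB. apply slash_imp.
    + apply (r_mp (Imp A B)); [apply thm_of_slash, HAB | exact HN2].
    + intros HCs. destruct (IHC HCs) as [HAs | HDs]; [| exact HDs].
      apply IHD. split; [exact HCs | exact (proj2 HAB HAs)].
Qed.

Theorem corollary5p8 : forall A B : Frm, Thm (Or A B) -> Thm A \/ Thm B.
Proof.
  intros A B H.
  destruct (slash_of_thm _ H) as [HA | HB].
  - left. exact (thm_of_slash _ HA).
  - right. exact (thm_of_slash _ HB).
Qed.
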